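(* Let $(a_n)_{n\ge0}$ be nonzero complex numbers with $|a_0|\ge|a_1|\ge\cdots$ and $\sum_n|a_n|^2<\infty$, and let $T$ be the weighted shift $Te_n=a_ne_{n+1}$. Let $H_1$ be the closed linear span of $\{e_n:n\ge1\}$. Then: (1) the map $\mathcal F:\mathcal A_T\to H_1$, $\mathcal F(S)=Se_0$, is a linear homeomorphism onto $H_1$, and $\mathcal J\mapsto\mathcal F(\mathcal J)$ is a lattice isomorphism from the lattice of closed ideals of $\mathcal A_T$ onto the lattice of closed $T$-invariant subspaces of $H_1$; (2) the map $\tilde{\mathcal F}:\tilde{\mathcal A}_T\to H$, $\tilde{\mathcal F}(S)=Se_0$, is a linear homeomorphism onto $H$, and $\mathcal J\mapsto\tilde{\mathcal F}(\mathcal J)$ is a lattice isomorphism from the lattice of closed ideals of $\tilde{\mathcal A}_T$ onto the lattice of closed $T$-invariant subspaces of $H$.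
   Context: $H$ is a complex Hilbert space with orthonormal basis $\{e_n\}_{n\ge0}$, $Te_n=a_ne_{n+1}$, $\mathcal A_T$ is the operator-norm closure in $\mathcal B(H)$ of the polynomials $p(T)$ with $p(0)=0$, and $\tilde{\mathcal A}_T=\mathcal A_T+\mathbb C I$ is its unitization inside $\mathcal B(H)$ (the norm closure of all polynomials in $T$). *)

From HB Require Import structures.
From mathcomp Require Import all_boot all_order all_algebra.
From mathcomp Require Import all_classical all_reals all_analysis.
From mathcomp Require Import complex.
Set Implicit Arguments.
Unset Strict Implicit.
Unset Printing Implicit Defensive.
Import Order.TTheory GRing.Theory Num.Theory.
Import numFieldNormedType.Exports.
Local Open Scope ring_scope.
Local Open Scope classical_set_scope.

Section Defs.
Variable R : realType.
Local Notation C := R[i].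

Definition cabs2 (z : C) : R := @complex.Re R z ^+ 2 + @complex.Im R z ^+ 2.
Definition cabs (z : C) : R := Num.sqrt (cabs2 z).

Definition l2 (x : nat -> C) : Prop :=
  cvgn (series (fun n => cabs2 (x n)) : R ^nat).
Definition l2norm (x : nat -> C) : R :=
  Num.sqrt (limn (series (fun n => cabs2 (x n)) : R ^nat)).
Definition vsub (x y : nat -> C) : nat -> C := fun n => x n - y n.
Definition e_ (k : nat) : nat -> C := fun n => (n == k)%:R.

Definition span_e (P : pred nat) : set (nat -> C) :=
  [set y | exists (N : nat) (c : nat -> C),
      y = (fun n => \sum_(k < N | P k) c k * e_ k n)].
Definition clspan_e (P : pred nat) : set (nat -> C) :=
  [set x | l2 x /\ forall eps : R, 0 < eps ->
      exists y, span_e P y /\ l2norm (vsub x y) < eps].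
Definition H1 : set (nat -> C) := clspan_e (fun k => (0 < k)%N).

(* Operators.  An element of B(H) is represented by its unique
   representative function that is zero outside of l^2. *)
Definition Op := (nat -> C) -> (nat -> C).
Definition bounded_op (A : Op) : Prop :=
  [/\ forall x, l2 x -> l2 (A x),
      forall x, ~ l2 x -> A x = (fun _ => 0),
      forall (c : C) x y, l2 x -> l2 y ->
        A (fun n => c * x n + y n) = (fun n => c * A x n + A y n) &
      exists M : R, forall x, l2 x -> l2norm (A x) <= M * l2norm x].
Definition opnorm (A : Op) : R :=
  sup [set l2norm (A x) | x in [set x | l2 x /\ l2norm x <= 1]].
Definition opsub (A B : Op) : Op := fun x => vsub (A x) (B x).
Definition opdist (A B : Op) : R := opnorm (opsub A B).

Definition shift (a : nat -> C) : Op := fun x n =>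
  if `[< l2 x >] then (match n with 0 => 0 | k.+1 => a k * x k end) else 0.
Definition polyop (a : nat -> C) (p : {poly C}) : Op := fun x n =>
  if `[< l2 x >] then \sum_(i < size p) p`_i * iter i (shift a) x n else 0.

Definition AT (a : nat -> C) : set Op :=
  [set S | bounded_op S /\ forall eps : R, 0 < eps ->
     exists p : {poly C}, p`_0 = 0 /\ opdist S (polyop a p) < eps].
(* unitization: operator-norm closure of all polynomials in T *)
Definition ATu (a : nat -> C) : set Op :=
  [set S | bounded_op S /\ forall eps : R, 0 < eps ->
     exists p : {poly C}, opdist S (polyop a p) < eps].

Definition closed_ideal (A J : set Op) : Prop :=
  [/\ J `<=` A,
      J (fun _ _ => 0),
      (forall S S', J S -> J S' -> J (fun x n => S x n + S' x n)) /\
      (forall (c : C) S, J S -> J (fun x n => c * S x n)),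
      forall S Q, A S -> J Q -> J (S \o Q) /\ J (Q \o S) &
      forall S, A S -> (forall eps : R, 0 < eps ->
                          exists Q, J Q /\ opdist S Q < eps) -> J S].

Definition closed_inv_subspace (a : nat -> C) (K M : set (nat -> C)) : Prop :=
  [/\ M `<=` K,
      M (fun _ => 0),
      (forall x y, M x -> M y -> M (fun n => x n + y n)) /\
      (forall (c : C) x, M x -> M (fun n => c * x n)),
      forall x, M x -> M (shift a x) &
      forall x, l2 x -> (forall eps : R, 0 < eps ->
                          exists y, M y /\ l2norm (vsub x y) < eps) -> M x].

Definition lin_homeo (A : set Op) (K : set (nat -> C)) (F : Op -> nat -> C) :=
  [/\ forall (c : C) S S', A S -> A S' ->
        F (fun x n => c * S x n + S' x n) = (fun n => c * F S n + F S' n),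
      (forall S, A S -> K (F S)) /\
      (forall x, K x -> exists S, A S /\ F S = x),
      forall S S', A S -> A S' -> F S = F S' -> S = S',
      (forall S (eps : R), A S -> 0 < eps -> exists2 delta : R, 0 < delta &
        forall S', A S' -> opdist S S' < delta -> l2norm (vsub (F S) (F S')) < eps) &
      (forall S (eps : R), A S -> 0 < eps -> exists2 delta : R, 0 < delta &
        forall S', A S' -> l2norm (vsub (F S) (F S')) < delta -> opdist S S' < eps)].

(* J |-> F(J) is a lattice (= order) isomorphism between the lattices
   {J | P J} and {M | Q M}, both ordered by inclusion *)
Definition lattice_iso (P : set Op -> Prop) (Q : set (nat -> C) -> Prop)
    (F : Op -> nat -> C) :=
  [/\ forall J, P J -> Q (F @` J),
      forall M, Q M -> exists J, P J /\ F @` J = M &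
      forall J1 J2, P J1 -> P J2 -> (J1 `<=` J2 <-> F @` J1 `<=` F @` J2)].

Definition Fe (S : Op) : nat -> C := S (e_ 0).

End Defs.

From Pilot Require Import Defs.
From HB Require Import structures.
From mathcomp Require Import all_boot all_order all_algebra.
From mathcomp Require Import all_classical all_reals all_analysis.
From mathcomp Require Import complex.
From mathcomp Require Import ring lra.
Import Order.TTheory GRing.Theory Num.Theory.
Import numFieldNormedType.Exports.
Local Open Scope ring_scope.
Local Open Scope classical_set_scope.

Set Implicit Arguments.
Unset Strict Implicit.

(* Put [beta n = a 0 * ... * a (n - 1)].  In the coordinates [x n / beta n] the
   shift [T] becomes multiplication by the variable, so the candidates for the
   elements of the algebras are the multipliers [mulop h], acting by
   [x |-> beta * ((h / beta) * (x / beta))] with [*] the Cauchy product.  Since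
   [|a n|] is nonincreasing, [|beta (j + k) / (beta j * beta k)|^2 <= psi j + psi k]
   with [psi j = |a j|^2 / |a 0|^2] summable, and a weighted Cauchy-Schwarz
   inequality gives [|mulop h x|^2 <= K |h|^2 |x|^2]: l^2 is a Banach algebra
   for this product.  Hence [mulop h] is the norm limit of the polynomials in
   [T] obtained by truncating [h], and conversely every [S] in the closure of
   the polynomials equals [mulop (S e_0)] (compare both on the unit ball).  So [S |-> S e_0] is a bi-Lipschitz linear bijection,
   onto l^2 for the unitization and onto [H1 = [set h | h 0 = 0]] for [A_T];
   closed ideals correspond to closed subspaces stable under all multipliers,
   which by polynomial approximation are the closed [T]-invariant subspaces. *)

Section RealInequalities.
Variable R : realFieldType.

Lemma le0_from_eps (X k : R) : 0 <= k -> (forall e, 0 < e -> X <= k * e) -> X <= 0.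
Proof.
move=> k0 Xle; rewrite leNgt; apply/negP => X0.
have k1 : 0 < k + 1 by rewrite ltr_wpDl.
have := Xle (X / (k + 1)) (divr_gt0 X0 k1).
rewrite mulrA ler_pdivlMr // => h; nra.
Qed.


Lemma mul2_le_weighted_sqr (A B W q : R) : 0 <= W -> 0 <= B ->
  A ^+ 2 <= W * B -> 2 * A * q <= W * q ^+ 2 + B.
Proof.
move=> W0 B0; have [->|Wn0] := eqVneq W 0 => AWB.
  rewrite mul0r in AWB.
  have -> : A = 0 by apply/eqP; rewrite -sqrf_eq0 eq_le AWB sqr_ge0.
  lra.
have Wp : 0 < W by rewrite lt_def Wn0.
have := sqr_ge0 (W * q - A) => sq0.
by rewrite -(ler_pM2l Wp); nra.
Qed.

Lemma sqr_sum_le_weighted (m : nat) (p w : nat -> R) : (forall k, 0 < w k) ->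
  (\sum_(k < m) p k) ^+ 2 <= (\sum_(k < m) w k) * \sum_(k < m) p k ^+ 2 / w k.
Proof.
move=> w_gt0; elim: m => [|m IH]; first by rewrite !big_ord0 mul0r expr0n.
rewrite !big_ord_recr /=.
set A := \sum_(i < m) p i; set W := \sum_(i < m) w i.
set B := \sum_(i < m) p i ^+ 2 / w i.
have W0 : 0 <= W by apply: sumr_ge0 => i _; exact: ltW.
have B0 : 0 <= B by apply: sumr_ge0 => i _; rewrite divr_ge0 ?sqr_ge0 ?ltW.
have wm := w_gt0 m; set q := p m / w m.
have -> : p m = q * w m by rewrite mulfVK // gt_eqF.
have -> : (q * w m) ^+ 2 / w m = q ^+ 2 * w m by field; rewrite gt_eqF.
have := mul2_le_weighted_sqr q W0 B0 IH => cross.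
rewrite -subr_ge0.
have -> : (W + w m) * (B + q ^+ 2 * w m) - (A + q * w m) ^+ 2 =
  (W * B - A ^+ 2) + w m * (W * q ^+ 2 + B - 2 * A * q) by ring.
by rewrite addr_ge0 ?mulr_ge0 ?subr_ge0 // ltW.
Qed.

End RealInequalities.

Section SquareSummable.
Variable R : realType.
Local Notation C := R[i].
Local Notation e0 := (@e_ R 0).

Lemma cabs2M (z w : C) : cabs2 (z * w) = cabs2 z * cabs2 w.
Proof. by case: z => x y; case: w => u v; rewrite /cabs2 /=; ring. Qed.

Lemma cabs2N (z : C) : cabs2 (- z) = cabs2 z.
Proof. by case: z => x y; rewrite /cabs2 /=; ring. Qed.

Lemma cabs2_0 : cabs2 (0 : C) = 0.
Proof. by rewrite /cabs2 /= expr0n /= addr0. Qed.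

Lemma cabs2_1 : cabs2 (1 : C) = 1.
Proof. by rewrite /cabs2 /= expr0n /= addr0 expr1n. Qed.

Lemma cabs2_ge0 (z : C) : 0 <= cabs2 z.
Proof. by rewrite /cabs2 addr_ge0 ?sqr_ge0. Qed.

Lemma cabs2_eq0 (z : C) : cabs2 z = 0 -> z = 0.
Proof.
case: z => x y; rewrite /cabs2 /= => /eqP; rewrite paddr_eq0 ?sqr_ge0 //.
by rewrite !sqrf_eq0 => /andP[/eqP-> /eqP->].
Qed.

Lemma cabs2_le0 (z : C) : cabs2 z <= 0 -> z = 0.
Proof. by move=> z0; apply: cabs2_eq0; apply/eqP; rewrite eq_le z0 cabs2_ge0. Qed.

Lemma cabs2_gt0 (z : C) : z != 0 -> 0 < cabs2 z.
Proof.
move=> nz; rewrite lt_def cabs2_ge0 andbT; apply/eqP => /cabs2_eq0 /eqP.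
by rewrite (negPf nz).
Qed.

Lemma cabs2V (z : C) : z != 0 -> cabs2 z^-1 = (cabs2 z)^-1.
Proof.
move=> nz; have nz2 : cabs2 z != 0 by rewrite gt_eqF ?cabs2_gt0.
by apply: (mulIf nz2); rewrite -cabs2M !mulVf ?cabs2_1.
Qed.

Lemma cabs2D_le (z w : C) : cabs2 (z + w) <= 2 * cabs2 z + 2 * cabs2 w.
Proof.
case: z => x y; case: w => u v; rewrite /cabs2 /=.
have := sqr_ge0 (x - u); have := sqr_ge0 (y - v); nra.
Qed.

Lemma cabs2E (z : C) : cabs2 z = cabs z ^+ 2.
Proof. by rewrite /cabs sqr_sqrtr // cabs2_ge0. Qed.

Lemma cabs2_prod (I : Type) (r : seq I) (P : pred I) (F : I -> C) :
  cabs2 (\prod_(i <- r | P i) F i) = \prod_(i <- r | P i) cabs2 (F i).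
Proof.
elim: r => [|i r IH]; first by rewrite !big_nil cabs2_1.
by rewrite !big_cons; case: (P i); rewrite // cabs2M IH.
Qed.

Lemma cabs2_sum_le (I : Type) (r : seq I) (P : pred I) (u : I -> C) :
  cabs2 (\sum_(i <- r | P i) u i) <= (\sum_(i <- r | P i) cabs (u i)) ^+ 2.
Proof.
have cabs_sum : cabs (\sum_(i <- r | P i) u i) <= \sum_(i <- r | P i) cabs (u i).
  have := ler_norm_sum r u P.
  suff -> : \sum_(i <- r | P i) `|u i| = ((\sum_(i <- r | P i) cabs (u i))%:C)%C.
    by rewrite normc_def lecR.
  by rewrite raddf_sum; apply: eq_bigr => i _; rewrite normc_def.
rewrite cabs2E lerXn2r ?nnegrE ?sqrtr_ge0 ?sumr_ge0 // => i _.
exact: sqrtr_ge0.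
Qed.

Definition psum2 (x : nat -> C) (N : nat) : R := \sum_(k < N) cabs2 (x k).
Definition norm2 (x : nat -> C) : R := limn (series (fun n => cabs2 (x n)) : R ^nat).

Lemma l2normE x : l2norm x = Num.sqrt (norm2 x).
Proof. by []. Qed.

Lemma l2norm_ge0 (x : nat -> C) : 0 <= l2norm x.
Proof. exact: sqrtr_ge0. Qed.

Lemma series_cabs2E x N : (series (fun n => cabs2 (x n)) : R ^nat) N = psum2 x N.
Proof. by rewrite seriesEord. Qed.

Lemma psum2_ge0 x N : 0 <= psum2 x N.
Proof. by apply: sumr_ge0 => i _; exact: cabs2_ge0. Qed.

Lemma nondecreasing_series_cabs2 x :
  nondecreasing_seq (series (fun n => cabs2 (x n)) : R ^nat).
Proof.
apply/nondecreasing_seqP => n; rewrite !series_cabs2E /psum2 big_ord_recr /=.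
by rewrite lerDl cabs2_ge0.
Qed.

Lemma psum2_le M N x : (M <= N)%N -> psum2 x M <= psum2 x N.
Proof. by move=> MN; rewrite -!series_cabs2E; apply: nondecreasing_series_cabs2. Qed.

Lemma psum2_le_norm2 x N : l2 x -> psum2 x N <= norm2 x.
Proof.
by move=> x2; rewrite -series_cabs2E; apply: nondecreasing_cvgn_le x2 N;
  exact: nondecreasing_series_cabs2.
Qed.

Lemma norm2_ge0 x : l2 x -> 0 <= norm2 x.
Proof. by move=> x2; apply: le_trans (psum2_le_norm2 0 x2); exact: psum2_ge0. Qed.

Lemma l2_norm2_le x B : (forall N, psum2 x N <= B) -> l2 x /\ norm2 x <= B.
Proof.
move=> xB; have x2 : l2 x.
  apply: nondecreasing_is_cvgn; first exact: nondecreasing_series_cabs2.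
  by exists B => _ [n _ <-]; rewrite series_cabs2E.
by split=> //; apply: limr_le => //; apply: nearW => N /=; rewrite series_cabs2E.
Qed.

Lemma norm2_tail x (e : R) : l2 x -> 0 < e -> exists N, norm2 x - psum2 x N < e.
Proof.
move=> /cvgrPdist_lt /(_ e) + e0 => /(_ e0) [N _ HN]; exists N.
by have := HN N (leqnn N); rewrite /= series_cabs2E; apply: le_lt_trans; exact: ler_norm.
Qed.

Lemma cabs2_le_norm2 x n : l2 x -> cabs2 (x n) <= norm2 x.
Proof.
move=> x2; apply: le_trans (psum2_le_norm2 n.+1 x2).
by rewrite /psum2 big_ord_recr /= lerDr psum2_ge0.
Qed.

Lemma norm2_le0 x : l2 x -> norm2 x <= 0 -> x = (fun _ => 0).
Proof.
move=> x2 x0; apply: funext => n; apply: cabs2_le0.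
exact: le_trans (cabs2_le_norm2 n x2) x0.
Qed.

Lemma l2_finsupp (x : nat -> C) m : (forall n, (m <= n)%N -> x n = 0) -> l2 x.
Proof.
move=> xm; apply: (proj1 (@l2_norm2_le x (psum2 x m) _)) => N.
case: (leqP N m) => [|mN]; first exact: psum2_le.
rewrite /psum2 -(subnKC (ltnW mN)) big_split_ord /= [X in _ + X]big1 ?addr0 //.
by move=> i _; rewrite xm ?leq_addr // cabs2_0.
Qed.

Lemma l2_0 : l2 (fun _ => (0 : C)).
Proof. exact: (@l2_finsupp _ 0). Qed.

Lemma norm2_0 : norm2 (fun _ => (0 : C)) = 0.
Proof.
have [_ le0] : l2 (fun _ => (0 : C)) /\ norm2 (fun _ => 0) <= 0.
  by apply: l2_norm2_le => N; rewrite /psum2 big1 // => i _; rewrite cabs2_0.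
by apply/eqP; rewrite eq_le le0 norm2_ge0 //; exact: l2_0.
Qed.

Lemma l2_lin (c : C) x y : l2 x -> l2 y ->
  l2 (fun n => c * x n + y n) /\
  norm2 (fun n => c * x n + y n) <= 2 * cabs2 c * norm2 x + 2 * norm2 y.
Proof.
move=> x2 y2; apply: l2_norm2_le => N; rewrite /psum2.
apply: (@le_trans _ _ (\sum_(k < N) (2 * cabs2 c * cabs2 (x k) + 2 * cabs2 (y k)))).
  by apply: ler_sum => k _; rewrite -mulrA -cabs2M; exact: cabs2D_le.
rewrite big_split /= -!mulr_sumr lerD // ler_wpM2l ?mulr_ge0 ?cabs2_ge0 //;
  exact: psum2_le_norm2.
Qed.

Lemma l2_scale (c : C) x : l2 x ->
  l2 (fun n => c * x n) /\ norm2 (fun n => c * x n) <= cabs2 c * norm2 x.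
Proof.
move=> x2; apply: l2_norm2_le => N; rewrite /psum2.
under eq_bigr do rewrite cabs2M.
by rewrite -mulr_sumr ler_wpM2l ?cabs2_ge0 ?psum2_le_norm2.
Qed.

Lemma l2_vsub x y : l2 x -> l2 y ->
  l2 (vsub x y) /\ norm2 (vsub x y) <= 2 * norm2 x + 2 * norm2 y.
Proof.
move=> x2 y2; have [xy2 le] := l2_lin (-1) y2 x2.
have -> : vsub x y = fun n => -1 * y n + x n.
  by apply: funext => n; rewrite /vsub mulN1r addrC.
split=> //; apply: le_trans le _.
by rewrite cabs2N cabs2_1 mulr1 addrC.
Qed.

Definition trunc N (x : nat -> C) n := if (n < N)%N then x n else 0.

Lemma l2_trunc N x : l2 (trunc N x).
Proof. by apply: (@l2_finsupp _ N) => n Nn; rewrite /trunc ltnNge Nn. Qed.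

Lemma norm2_vsub_trunc_le N x : l2 x -> norm2 (vsub x (trunc N x)) <= norm2 x - psum2 x N.
Proof.
move=> x2; apply: (proj2 (l2_norm2_le _)) => M.
apply: (@le_trans _ _ (psum2 (vsub x (trunc N x)) (N + M))).
  by apply: psum2_le; rewrite leq_addl.
have -> : psum2 (vsub x (trunc N x)) (N + M) = psum2 x (N + M) - psum2 x N.
  rewrite /psum2 !big_split_ord /= big1 ?add0r; last first.
    by move=> i _; rewrite /vsub /trunc ltn_ord subrr cabs2_0.
  rewrite addrAC subrr add0r; apply: eq_bigr => i _.
  by rewrite /vsub /trunc ltnNge leq_addr /= subr0.
by rewrite lerB // psum2_le_norm2.
Qed.

Lemma norm2_vsubC x y : norm2 (vsub x y) = norm2 (vsub y x).
Proof.
rewrite /norm2; congr (limn (series _)).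
by apply: funext => n; rewrite /vsub -cabs2N opprB.
Qed.

Lemma norm2_vsub_triangle x y z : l2 x -> l2 y -> l2 z ->
  norm2 (vsub x z) <= 2 * norm2 (vsub x y) + 2 * norm2 (vsub y z).
Proof.
move=> x2 y2 z2; have [xy2 _] := l2_vsub x2 y2; have [yz2 _] := l2_vsub y2 z2.
have [_ le] := l2_lin 1 xy2 yz2.
have <- : (fun n => 1 * vsub x y n + vsub y z n) = vsub x z.
  by apply: funext => n; rewrite /vsub mul1r addrA subrK.
by rewrite cabs2_1 mulr1 in le.
Qed.

Lemma l2norm_le1 x : (l2norm x <= 1) = (norm2 x <= 1).
Proof. by rewrite l2normE -{1}sqrtr1 ler_sqrt. Qed.

Lemma l2norm_lt x (e : R) : 0 < e -> (l2norm x < e) = (norm2 x < e ^+ 2).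
Proof.
move=> e0; rewrite l2normE {1}(_ : e = Num.sqrt (e ^+ 2)) ?ltr_sqrt ?exprn_gt0 //.
by rewrite sqrtr_sqr ger0_norm // ltW.
Qed.

Lemma coord0_eq0_approx (x : nat -> C) : l2 x ->
  (forall e, 0 < e -> exists y, (l2 y /\ y 0%N = 0) /\ l2norm (vsub x y) < e) ->
  x 0%N = 0.
Proof.
move=> x2 xapp; apply: cabs2_le0; apply: (le0_from_eps (k := 1)) => // e e_gt0.
have [y [[y2 y0] xy]] := xapp (Num.sqrt e) ltac:(by rewrite sqrtr_gt0).
have [xy2 _] := l2_vsub x2 y2.
rewrite mul1r -[x 0%N]subr0 -y0; apply: le_trans (cabs2_le_norm2 0 xy2) _.
have e_ge0 := ltW e_gt0.
by move: xy; rewrite l2norm_lt ?sqrtr_gt0 // sqr_sqrtr // => /ltW.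
Qed.

Lemma l2_e0 : l2 e0.
Proof. by apply: (@l2_finsupp _ 1) => -[]. Qed.

Lemma norm2_e0 : norm2 e0 <= 1.
Proof.
apply: (proj2 (l2_norm2_le _)) => -[|N]; first by rewrite /psum2 big_ord0 ler01.
rewrite /psum2 big_ord_recl /= /e_ /= cabs2_1 big1 ?addr0 // => i _.
by rewrite cabs2_0.
Qed.

Lemma sum_e_pos (x : nat -> C) N n :
  \sum_(k < N | (0 < k)%N) x k * e_ R k n = if (n < N)%N && (0 < n)%N then x n else 0.
Proof.
rewrite big_mkcond /=; elim: N => [|N IH]; first by rewrite big_ord0.
rewrite big_ord_recr /= IH /e_.
case: (ltngtP n N) => [nN|Nn|->].
- rewrite (ltn_trans nN (ltnSn N)) /=.
  by case: (0 < n)%N; case: (0 < N)%N; rewrite /= ?mulr0n ?mulr0 ?addr0.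
- rewrite ltnS (leqNgt n N) Nn /= add0r.
  by case: (0 < N)%N; rewrite /= ?mulr0n ?mulr0.
- by rewrite /= add0r ltnSn /=; case: (0 < N)%N; rewrite /= ?mulr1.
Qed.

Lemma H1_iff (x : nat -> C) : H1 x <-> l2 x /\ x 0%N = 0.
Proof.
split=> [[x2 xapp]|[x2 x0]].
  split=> //; apply: coord0_eq0_approx x2 _ => e e_gt0.
  have [_ [[N [c ->]] xy]] := xapp e e_gt0.
  exists (fun n => \sum_(k < N | (0 < k)%N) c k * e_ R k n); split=> //; split.
    by apply: (@l2_finsupp _ N) => n Nn; rewrite sum_e_pos ltnNge Nn.
  by rewrite sum_e_pos andbF.
split=> // e e_gt0; have [N hN] := norm2_tail x2 (exprn_gt0 2 e_gt0).
exists (trunc N x); split.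
  exists N, x; apply: funext => n; rewrite sum_e_pos /trunc.
  by case: n => [|n] /=; rewrite ?x0 ?andbF ?andbT //; case: ifP.
by rewrite l2norm_lt //; apply: le_lt_trans hN; exact: norm2_vsub_trunc_le.
Qed.

End SquareSummable.

Arguments cabs2_0 {R}.
Arguments cabs2_1 {R}.
Arguments l2_0 {R}.
Arguments norm2_0 {R}.
Arguments l2_e0 {R}.
Arguments norm2_e0 {R}.

Section L2Operators.
Variable R : realType.
Local Notation C := R[i].

Definition l2_bounded (A : Op R) :=
  (forall x : nat -> C, l2 x -> l2 (A x)) /\
  exists M, 0 <= M /\ forall x, l2 x -> norm2 (A x) <= M * norm2 x.

Lemma bounded_op_l2_bounded A : bounded_op A -> l2_bounded A.
Proof.
case=> A2 _ _ [M AM]; split=> //; exists (M ^+ 2); split; first exact: sqr_ge0.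
move=> x x2; have le := AM x x2.
have : l2norm (A x) ^+ 2 <= (M * l2norm x) ^+ 2.
  by apply: lerXn2r; rewrite ?nnegrE ?l2norm_ge0 // (le_trans (l2norm_ge0 _) le).
by rewrite exprMn !l2normE !sqr_sqrtr ?norm2_ge0 //; exact: A2.
Qed.

Lemma l2_bounded_sub S S' : l2_bounded S -> l2_bounded S' -> l2_bounded (opsub S S').
Proof.
move=> [S2 [M [M0 SM]]] [S'2 [M' [M'0 S'M]]]; split.
  by move=> x x2; case: (l2_vsub (S2 x x2) (S'2 x x2)).
exists (2 * M + 2 * M'); split; first by rewrite addr_ge0 ?mulr_ge0.
move=> x x2; have [_ le] := l2_vsub (S2 x x2) (S'2 x x2); apply: le_trans le _.
have -> : (2 * M + 2 * M') * norm2 x = 2 * (M * norm2 x) + 2 * (M' * norm2 x).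
  by ring.
by rewrite lerD // ler_wpM2l // ?SM ?S'M.
Qed.

Lemma l2norm_le_opnorm A x : l2_bounded A -> l2 x -> norm2 x <= 1 ->
  l2norm (A x) <= opnorm A.
Proof.
move=> [_ [M [M0 AM]]] x2 x1; apply: ub_le_sup; last first.
  by exists x => //; split => //; rewrite l2norm_le1.
exists (Num.sqrt M) => _ [y [y2 y1] <-].
rewrite l2normE ler_sqrt // (le_trans (AM y y2)) // -{2}(mulr1 M) ler_wpM2l //.
by rewrite -l2norm_le1.
Qed.

Lemma opnorm_le A d : l2_bounded A -> 0 <= d ->
  (forall x, l2 x -> norm2 x <= 1 -> norm2 (A x) <= d ^+ 2) -> opnorm A <= d.
Proof.
move=> [A2 _] d0 Ad; apply: ge_sup.
  exists (l2norm (A (fun _ => 0))), (fun _ => 0) => //; split; first exact: l2_0.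
  by rewrite l2norm_le1 norm2_0 ler01.
move=> _ [y [y2 y1] <-]; rewrite l2norm_le1 in y1.
by rewrite l2normE -(ger0_norm d0) -sqrtr_sqr ler_sqrt ?sqr_ge0 ?Ad.
Qed.

Lemma opnorm_ge0 A : l2_bounded A -> 0 <= opnorm A.
Proof.
move=> A_bd; have := l2norm_le_opnorm A_bd l2_0.
by rewrite norm2_0 ler01 => /(_ isT); apply: le_trans; exact: l2norm_ge0.
Qed.

Lemma norm2_vsub_le_opdist S S' x : l2_bounded S -> l2_bounded S' ->
  l2 x -> norm2 x <= 1 -> norm2 (vsub (S x) (S' x)) <= opdist S S' ^+ 2.
Proof.
move=> S_bd S'_bd x2 x1; have D_bd := l2_bounded_sub S_bd S'_bd.
have le := l2norm_le_opnorm D_bd x2 x1.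
have : l2norm (vsub (S x) (S' x)) ^+ 2 <= opdist S S' ^+ 2.
  by apply: lerXn2r; rewrite ?nnegrE ?l2norm_ge0 // (le_trans (l2norm_ge0 _) le).
by rewrite l2normE sqr_sqrtr // norm2_ge0 //; case: D_bd => D2 _; exact: D2.
Qed.

Lemma bounded_op0 (S : Op R) : bounded_op S -> S (fun _ => 0) = fun _ => 0.
Proof.
case=> _ _ Slin _; have := Slin 1 _ _ l2_0 l2_0.
have -> : (fun n : nat => 1 * (0 : C) + 0) = fun _ => 0.
  by apply: funext => n; rewrite mulr0 addr0.
move=> S0; apply: funext => n; have /= := congr1 (fun f => f n) S0.
by rewrite mul1r -{1}(addr0 (S _ n)) => /addrI.
Qed.

Lemma bounded_opZ (S : Op R) c x : bounded_op S -> l2 x ->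
  S (fun n => c * x n) = fun n => c * S x n.
Proof.
move=> S_bd x2; have [_ _ Slin _] := S_bd.
have := Slin c x _ x2 l2_0; rewrite (bounded_op0 S_bd).
have -> : (fun n => c * x n + 0) = fun n => c * x n.
  by apply: funext => n; rewrite addr0.
by move=> ->; apply: funext => n; rewrite addr0.
Qed.

End L2Operators.

Section Convolution.
Variable K : comNzRingType.

Definition conv (u v : nat -> K) n := \sum_(j < n.+1) u j * v (n - j)%N.

Lemma conv_coef_poly u v n N : (n < N)%N ->
  conv u v n = ((\poly_(i < N) u i) * \poly_(i < N) v i)`_n.
Proof.
move=> nN; rewrite coefM /conv; apply: eq_bigr => j _.
have jn : (j <= n)%N by rewrite -ltnS.
by rewrite !coef_poly (leq_ltn_trans jn nN) (leq_ltn_trans (leq_subr j n) nN).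
Qed.

Lemma convC u v n : conv u v n = conv v u n.
Proof. by rewrite !(@conv_coef_poly _ _ n n.+1) // mulrC. Qed.

Lemma eq_conv u u' v v' n : (forall k, (k <= n)%N -> u k = u' k) ->
  (forall k, (k <= n)%N -> v k = v' k) -> conv u v n = conv u' v' n.
Proof.
move=> uu' vv'; apply: eq_bigr => j _.
have jn : (j <= n)%N by rewrite -ltnS.
by rewrite uu' // vv' // leq_subr.
Qed.

Lemma convA u v w n : conv u (conv v w) n = conv (conv u v) w n.
Proof.
set Pu := \poly_(i < n.+1) u i; set Pv := \poly_(i < n.+1) v i.
set Pw := \poly_(i < n.+1) w i.
have -> : conv u (conv v w) n = (Pu * (Pv * Pw))`_n.
  rewrite coefM /conv; apply: eq_bigr => j _.
  rewrite coef_poly (ltn_ord j); congr (_ * _).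
  by rewrite -/(conv v w (n - j)) (@conv_coef_poly _ _ _ n.+1) // ltnS leq_subr.
have -> : conv (conv u v) w n = ((Pu * Pv) * Pw)`_n.
  rewrite coefM /conv; apply: eq_bigr => j _.
  rewrite [Pw`_ _]coef_poly ltnS leq_subr; congr (_ * _).
  by rewrite -/(conv u v j) (@conv_coef_poly _ _ _ n.+1).
by rewrite mulrA.
Qed.

Lemma conv_linl c u u' v n :
  conv (fun k => c * u k + u' k) v n = c * conv u v n + conv u' v n.
Proof.
by rewrite /conv mulr_sumr -big_split; apply: eq_bigr => j _; rewrite mulrDl mulrA.
Qed.

Lemma conv_linr c u v v' n :
  conv u (fun k => c * v k + v' k) n = c * conv u v n + conv u v' n.
Proof. by rewrite convC conv_linl !(convC u). Qed.

Lemma sum_conv u v N :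
  \sum_(n < N) conv u v n = \sum_(j < N) u j * \sum_(k < N - j) v k.
Proof.
elim: N => [|N IH]; first by rewrite !big_ord0.
rewrite big_ord_recr /= IH [in RHS]big_ord_recr /= subSnn big_ord1.
rewrite /conv big_ord_recr /= subnn addrA; congr (_ + _).
rewrite -big_split /=; apply: eq_bigr => j _.
by rewrite subSn ?(ltnW (ltn_ord j)) // big_ord_recr /= mulrDr.
Qed.

End Convolution.

Lemma sum_conv_le (R : numDomainType) (u v : nat -> R) N :
  (forall n, 0 <= u n) -> (forall n, 0 <= v n) ->
  \sum_(n < N) conv u v n <= (\sum_(j < N) u j) * \sum_(k < N) v k.
Proof.
move=> u0 v0; rewrite sum_conv mulr_suml; apply: ler_sum => j _.
rewrite ler_wpM2l // [leRHS](_ : _ = \sum_(k < (N - j) + j) v k).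
  by rewrite big_split_ord /= lerDl sumr_ge0.
by rewrite subnK // ltnW.
Qed.

Lemma sum_ord_pad (V : nmodType) (F : nat -> V) m M :
  (forall i, (m <= i)%N -> F i = 0) -> (m <= M)%N ->
  \sum_(i < m) F i = \sum_(i < M) F i.
Proof.
move=> Fm mM; rewrite -(subnKC mM) big_split_ord /= [X in _ = _ + X]big1 ?addr0 //.
by move=> i _; rewrite Fm // leq_addr.
Qed.

Section Multipliers.
Variable R : realType.
Local Notation C := R[i].
Variable a : nat -> C.
Hypothesis a_neq0 : forall n, a n != 0.
Hypothesis cabs_a_nonincr : forall n, cabs (a n.+1) <= cabs (a n).
Hypothesis l2a : l2 a.
Local Notation T := (Defs.shift a).
Local Notation e0 := (@e_ R 0).

Definition beta n : C := \prod_(i < n) a i.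

Lemma beta_neq0 n : beta n != 0.
Proof. by apply/prodf_neq0 => i _. Qed.

Lemma beta0 : beta 0 = 1.
Proof. by rewrite /beta big_ord0. Qed.

Lemma betaS n : beta n.+1 = beta n * a n.
Proof. by rewrite /beta big_ord_recr. Qed.

Lemma betaD j k : beta (j + k) = beta j * \prod_(i < k) a (j + i)%N.
Proof. by rewrite /beta big_split_ord. Qed.

Lemma cabs2_a_le m n : (m <= n)%N -> cabs2 (a n) <= cabs2 (a m).
Proof.
move=> /subnKC <-; elim: (n - m)%N => [|d IH]; first by rewrite addn0.
apply: le_trans IH; rewrite addnS !cabs2E.
by apply: lerXn2r; rewrite ?nnegrE ?sqrtr_ge0.
Qed.

Definition psi j := cabs2 (a j) / cabs2 (a 0).
Definition rho j k := beta (j + k) / (beta j * beta k).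

Lemma psi_gt0 j : 0 < psi j.
Proof. by rewrite divr_gt0 ?cabs2_gt0. Qed.

Lemma sum_psi_le n : \sum_(j < n) psi j <= norm2 a / cabs2 (a 0).
Proof.
by rewrite -mulr_suml ler_wpM2r ?invr_ge0 ?cabs2_ge0 ?psum2_le_norm2.
Qed.

(* [rho j k] is the product of the [a (j + i) / a i], [i < k]: all are at most
   1 in modulus, and the one with [i = 0] gives [psi j]. *)
Lemma cabs2_rho_le j k : cabs2 (rho j k) <= psi j + psi k.
Proof.
have -> : rho j k = \prod_(i < k) (a (j + i)%N / a i).
  by rewrite /rho betaD prodf_div /beta; field; rewrite !beta_neq0.
rewrite cabs2_prod; case: k => [|k].
  by rewrite big_ord0 /psi mulfV ?lerDr ?divr_ge0 ?cabs2_ge0 // gt_eqF ?cabs2_gt0.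
apply: le_trans (_ : psi j <= _); last by rewrite lerDl ltW ?psi_gt0.
rewrite big_ord_recl /= addn0 /psi -cabs2V // -cabs2M -[leRHS]mulr1.
rewrite ler_wpM2l ?cabs2_ge0 //; apply: prodr_ile1 => i _.
rewrite cabs2M cabs2V // mulr_ge0 ?invr_ge0 ?cabs2_ge0 //=.
by rewrite ler_pdivrMr ?cabs2_gt0 // mul1r cabs2_a_le // leq_addl.
Qed.

Definition unweight (u : nat -> C) k := u k / beta k.

Definition mulop (h : nat -> C) : Op R := fun x n =>
  if `[< l2 x >] then beta n * conv (unweight h) (unweight x) n else 0.

Lemma mulopE h x n : l2 x -> mulop h x n = beta n * conv (unweight h) (unweight x) n.
Proof. by move=> x2; rewrite /mulop asboolT. Qed.

Lemma mulop_notl2 h x : ~ l2 x -> mulop h x = fun _ => 0.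
Proof. by move=> x2; apply: funext => n; rewrite /mulop asboolF. Qed.

Lemma mulop_rho h x n : l2 x ->
  mulop h x n = \sum_(j < n.+1) h j * x (n - j)%N * rho j (n - j).
Proof.
move=> x2; rewrite mulopE // /conv mulr_sumr; apply: eq_bigr => j _.
rewrite /unweight /rho subnKC; last by rewrite -ltnS.
by rewrite [in LHS]mulrACA [LHS]mulrCA invfM.
Qed.

Definition Kmul := 2 * (norm2 a / cabs2 (a 0)).

Lemma Kmul_ge0 : 0 <= Kmul.
Proof. by rewrite mulr_ge0 // divr_ge0 ?cabs2_ge0 ?norm2_ge0. Qed.

Lemma cabs2_mulop_le h x n : l2 x -> cabs2 (mulop h x n) <=
  Kmul * conv (fun j => cabs2 (h j)) (fun j => cabs2 (x j)) n.
Proof.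
move=> x2; rewrite mulop_rho //.
set u := fun j : nat => h j * x (n - j)%N * rho j (n - j).
set w := fun j : nat => psi j + psi (n - j)%N.
have w_gt0 j : 0 < w j by rewrite addr_gt0 ?psi_gt0.
apply: le_trans (cabs2_sum_le _ _ _) _.
apply: le_trans (sqr_sum_le_weighted n.+1 (fun j => cabs (u j)) w_gt0) _.
apply: ler_pM.
- by apply: sumr_ge0 => j _; exact: ltW.
- by apply: sumr_ge0 => j _; rewrite divr_ge0 ?sqr_ge0 ?ltW.
- rewrite /w big_split /= /Kmul mulr2n mulrDl mul1r lerD ?sum_psi_le //.
  have -> : \sum_(j < n.+1) psi (n - j)%N = \sum_(j < n.+1) psi j.
    rewrite (reindex_inj rev_ord_inj); apply: eq_bigr => j _ /=.
    by rewrite subSS subKn // -ltnS.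
  exact: sum_psi_le.
- apply: ler_sum => j _; rewrite -cabs2E ler_pdivrMr // /u cabs2M (cabs2M (h j)).
  by rewrite ler_wpM2l ?mulr_ge0 ?cabs2_ge0 ?cabs2_rho_le.
Qed.

Lemma l2_mulop h x : l2 h -> l2 x ->
  l2 (mulop h x) /\ norm2 (mulop h x) <= Kmul * norm2 h * norm2 x.
Proof.
move=> h2 x2; apply: l2_norm2_le => N; rewrite /psum2.
apply: (@le_trans _ _ (\sum_(n < N) Kmul *
    conv (fun j => cabs2 (h j)) (fun j => cabs2 (x j)) n)).
  by apply: ler_sum => n _; exact: cabs2_mulop_le.
rewrite -mulr_sumr -mulrA ler_wpM2l ?Kmul_ge0 //.
apply: le_trans (sum_conv_le N (fun n => cabs2_ge0 _) (fun n => cabs2_ge0 _)) _.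
by apply: ler_pM; rewrite ?psum2_ge0 ?psum2_le_norm2.
Qed.

Lemma unweight_lin c x y :
  unweight (fun n => c * x n + y n) = fun k => c * unweight x k + unweight y k.
Proof. by apply: funext => k; rewrite /unweight mulrDl mulrA. Qed.

Lemma unweight_mulop h x k : l2 x ->
  unweight (mulop h x) k = conv (unweight h) (unweight x) k.
Proof. by move=> x2; rewrite /unweight mulopE // mulrC mulrA mulVf ?mul1r ?beta_neq0. Qed.

Lemma mulop_linr h c x y : l2 x -> l2 y ->
  mulop h (fun n => c * x n + y n) = fun n => c * mulop h x n + mulop h y n.
Proof.
move=> x2 y2; have [xy2 _] := l2_lin c x2 y2.
by apply: funext => n; rewrite !mulopE // unweight_lin conv_linr mulrDr mulrCA.
Qed.

Lemma mulop_linl c h g x :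
  mulop (fun n => c * h n + g n) x = fun n => c * mulop h x n + mulop g x n.
Proof.
have [x2|x2] := pselect (l2 x); last first.
  by rewrite !mulop_notl2 //; apply: funext => n; rewrite mulr0 addr0.
by apply: funext => n; rewrite !mulopE // unweight_lin conv_linl mulrDr mulrCA.
Qed.

Lemma mulop0l : mulop (fun _ => 0) = fun _ _ => 0.
Proof.
apply: funext => x; have [x2|x2] := pselect (l2 x); last by rewrite mulop_notl2.
apply: funext => n; rewrite mulopE // /conv big1 ?mulr0 // => j _.
by rewrite /unweight !mul0r.
Qed.

Lemma mulop0r h : mulop h (fun _ => 0) = fun _ => 0.
Proof.
apply: funext => n; rewrite mulopE; last exact: l2_0.
by rewrite /unweight /conv big1 ?mulr0 // => j _; rewrite mul0r mulr0.
Qed.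

Lemma mulop_vsub h g x : vsub (mulop h x) (mulop g x) = mulop (vsub h g) x.
Proof.
have -> : vsub h g = fun n => -1 * g n + h n.
  by apply: funext => n; rewrite /vsub mulN1r addrC.
by rewrite mulop_linl; apply: funext => n; rewrite /vsub mulN1r addrC.
Qed.

Lemma mulopC h g : l2 h -> l2 g -> mulop h g = mulop g h.
Proof. by move=> h2 g2; apply: funext => n; rewrite !mulopE // convC. Qed.

Lemma mulop_comp h g : l2 g -> mulop h \o mulop g = mulop (mulop h g).
Proof.
move=> g2; apply: funext => x /=.
have [x2|x2] := pselect (l2 x); last first.
  by rewrite (mulop_notl2 g x2) (mulop_notl2 _ x2) mulop0r.
have gx2 : l2 (mulop g x) by case: (l2_mulop g2 x2).
apply: funext => n; rewrite !mulopE //; congr (_ * _).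
rewrite (@eq_conv _ _ (unweight h) _ (conv (unweight g) (unweight x))) //; last first.
  by move=> k _; rewrite unweight_mulop.
by rewrite convA; apply: eq_conv => // k _; rewrite unweight_mulop.
Qed.

Lemma bounded_op_mulop h : l2 h -> bounded_op (mulop h).
Proof.
move=> h2; split.
- by move=> x x2; case: (l2_mulop h2 x2).
- by move=> x x2; rewrite mulop_notl2.
- by move=> c x y x2 y2; rewrite mulop_linr.
exists (Num.sqrt (Kmul * norm2 h)) => x x2.
have [_ le] := l2_mulop h2 x2.
have := norm2_ge0 h2; have := norm2_ge0 x2; have := Kmul_ge0 => K0 x0 h0.
rewrite !l2normE -sqrtrM; last by rewrite mulr_ge0.
by rewrite ler_sqrt // mulr_ge0 // mulr_ge0.
Qed.

Lemma l2_bounded_mulop h : l2 h -> l2_bounded (mulop h).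
Proof. by move=> h2; apply: bounded_op_l2_bounded; exact: bounded_op_mulop. Qed.

Lemma mulop_e0 h : mulop h e0 = h.
Proof.
apply: funext => n; rewrite mulopE; last exact: l2_e0.
rewrite /conv big_ord_recr /= subnn big1 ?add0r; last first.
  by move=> j _; rewrite /unweight /e_ subn_eq0 leqNgt ltn_ord /= mul0r mulr0.
by rewrite /unweight /e_ /= beta0 divr1 mulr1 mulrC mulfVK ?beta_neq0.
Qed.

Lemma l2_shift x : l2 x -> l2 (T x).
Proof.
move=> x2; apply: (proj1 (@l2_norm2_le _ _ (cabs2 (a 0) * norm2 x) _)) => -[|N].
  by rewrite /psum2 big_ord0 mulr_ge0 ?cabs2_ge0 ?norm2_ge0.
rewrite /psum2 big_ord_recl /= /Defs.shift asboolT // cabs2_0 add0r.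
apply: (@le_trans _ _ (\sum_(j < N) cabs2 (a 0) * cabs2 (x j))).
  by apply: ler_sum => j _; rewrite cabs2M ler_wpM2r ?cabs2_ge0 ?cabs2_a_le.
by rewrite -mulr_sumr ler_wpM2l ?cabs2_ge0 ?psum2_le_norm2.
Qed.

Lemma l2_iter_shift i x : l2 x -> l2 (iter i T x).
Proof. by move=> x2; elim: i => [|i IH] //=; exact: l2_shift. Qed.

Lemma iter_shiftE i x : l2 x -> iter i T x =
  fun n => if (i <= n)%N then beta n / beta (n - i) * x (n - i)%N else 0.
Proof.
move=> x2; elim: i => [|i IH].
  by apply: funext => n /=; rewrite subn0 mulfV ?mul1r ?beta_neq0.
have := l2_iter_shift (i := i) x2; rewrite IH => IH2.
rewrite iterS IH; apply: funext => -[|n]; rewrite /Defs.shift asboolT //.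
rewrite ltnS subSS; case: ifP => _; last by rewrite mulr0.
by rewrite betaS mulrA mulrCA mulrA.
Qed.

Definition poly_e0 (p : {poly C}) n := p`_n * beta n.

Lemma l2_poly_e0 p : l2 (poly_e0 p).
Proof.
by apply: (@l2_finsupp _ _ (size p)) => n pn; rewrite /poly_e0 nth_default // mul0r.
Qed.

Lemma poly_e0_0 p : poly_e0 p 0 = p`_0.
Proof. by rewrite /poly_e0 beta0 mulr1. Qed.

Lemma polyop_mulop p : polyop a p = mulop (poly_e0 p).
Proof.
apply: funext => x; have [x2|x2] := pselect (l2 x); last first.
  by rewrite mulop_notl2 //; apply: funext => n; rewrite /polyop asboolF.
apply: funext => n; rewrite /polyop asboolT // mulopE //.
set G := fun i => p`_i * (if (i <= n)%N then beta n / beta (n - i) * x (n - i)%N else 0).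
have G_size i : (size p <= i)%N -> G i = 0 by move=> pi; rewrite /G nth_default ?mul0r.
have G_gtn i : (n.+1 <= i)%N -> G i = 0.
  by rewrite /G ltnNge => /negbTE ->; rewrite mulr0.
have -> : \sum_(i < size p) p`_i * iter i T x n = \sum_(i < size p) G i.
  by apply: eq_bigr => i _; rewrite iter_shiftE.
rewrite (sum_ord_pad G_size (leq_addr n.+1 (size p))).
rewrite -(sum_ord_pad G_gtn (leq_addl _ _)) /conv mulr_sumr.
apply: eq_bigr => j _; have jn : (j <= n)%N by rewrite -ltnS.
rewrite /G jn /unweight /poly_e0 mulfK ?beta_neq0 //.
by rewrite -mulrA [_^-1 * _]mulrC mulrCA.
Qed.

Lemma shift_mulop : T = mulop (poly_e0 'X).
Proof.
rewrite -polyop_mulop; apply: funext => x; apply: funext => n.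
rewrite /polyop; case: asboolP => x2; last by rewrite /Defs.shift asboolF.
by rewrite size_polyX big_ord_recr big_ord1 /= !coefX /= mul0r add0r mul1r.
Qed.

Definition trunc_poly N h : {poly C} := \poly_(i < N) (h i / beta i).

Lemma poly_e0_trunc_poly N h : poly_e0 (trunc_poly N h) = trunc N h.
Proof.
apply: funext => n; rewrite /poly_e0 /trunc_poly /trunc coef_poly.
by case: ifP => _; rewrite ?mul0r // mulfVK ?beta_neq0.
Qed.

Lemma norm2_e0_vsub_le_opdist S S' : l2_bounded S -> l2_bounded S' ->
  norm2 (vsub (S e0) (S' e0)) <= opdist S S' ^+ 2.
Proof. by move=> S_bd S'_bd; apply: norm2_vsub_le_opdist l2_e0 norm2_e0. Qed.

Lemma l2norm_e0_vsub_le_opdist S S' : l2_bounded S -> l2_bounded S' ->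
  l2norm (vsub (S e0) (S' e0)) <= opdist S S'.
Proof.
by move=> S_bd S'_bd; apply: l2norm_le_opnorm l2_e0 norm2_e0; exact: l2_bounded_sub.
Qed.

Lemma opdist_mulop_le h g : l2 h -> l2 g ->
  opdist (mulop h) (mulop g) <= Num.sqrt (Kmul * norm2 (vsub h g)).
Proof.
move=> h2 g2; have [hg2 _] := l2_vsub h2 g2.
apply: opnorm_le; rewrite ?sqrtr_ge0 //.
  by apply: l2_bounded_sub; exact: l2_bounded_mulop.
have K0 : 0 <= Kmul * norm2 (vsub h g) by apply: mulr_ge0; rewrite ?Kmul_ge0 ?norm2_ge0.
move=> x x2 x1; rewrite /opsub mulop_vsub sqr_sqrtr //.
have [_ le] := l2_mulop hg2 x2; apply: le_trans le _.
by rewrite -[leRHS]mulr1 ler_wpM2l.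
Qed.

Lemma opdist_mulop_lt h g (e : R) : l2 h -> l2 g -> 0 < e ->
  l2norm (vsub h g) < e / (Num.sqrt Kmul + 1) -> opdist (mulop h) (mulop g) < e.
Proof.
move=> h2 g2 e_gt0 lt; apply: le_lt_trans (opdist_mulop_le h2 g2) _.
have K1 : 0 < Num.sqrt Kmul + 1 by rewrite ltr_wpDl ?sqrtr_ge0.
rewrite sqrtrM ?Kmul_ge0 // -l2normE.
apply: (@le_lt_trans _ _ (Num.sqrt Kmul * (e / (Num.sqrt Kmul + 1)))).
  by rewrite ler_wpM2l ?sqrtr_ge0 // ltW.
by rewrite mulrA ltr_pdivrMr // mulrDr mulr1 mulrC ltrDl.
Qed.

Lemma mulop_approx h (e : R) : l2 h -> 0 < e ->
  exists N, opdist (mulop h) (polyop a (trunc_poly N h)) < e.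
Proof.
move=> h2 e_gt0; have K1 : 0 < Kmul + 1 by rewrite ltr_wpDl ?Kmul_ge0.
have [N hN] := norm2_tail h2 (divr_gt0 (exprn_gt0 2 e_gt0) K1).
exists N; rewrite polyop_mulop poly_e0_trunc_poly.
apply: le_lt_trans (opdist_mulop_le h2 (@l2_trunc _ N h)) _.
rewrite [X in _ < X](_ : e = Num.sqrt (e ^+ 2)); last by rewrite sqrtr_sqr ger0_norm // ltW.
rewrite ltr_sqrt ?exprn_gt0 //.
set t := norm2 h - psum2 h N in hN.
have [htr2 _] := l2_vsub h2 (@l2_trunc _ N h).
apply: (@le_lt_trans _ _ ((Kmul + 1) * t)); last by rewrite -ltr_pdivlMl // mulrC.
by rewrite ler_pM ?Kmul_ge0 ?norm2_ge0 ?norm2_vsub_trunc_le ?lerDl.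
Qed.

Lemma mulop_approx_pointwise h q (e : R) : l2 h -> l2 q -> 0 < e ->
  exists N, l2norm (vsub (mulop h q) (polyop a (trunc_poly N h) q)) < e.
Proof.
move=> h2 q2 e_gt0; have K0 := Kmul_ge0; have q0 := norm2_ge0 q2.
have Kq1 : 0 < (Kmul + 1) * (norm2 q + 1) by rewrite mulr_gt0 ?ltr_wpDl.
have [N hN] := norm2_tail h2 (divr_gt0 (exprn_gt0 2 e_gt0) Kq1).
exists N; rewrite polyop_mulop poly_e0_trunc_poly mulop_vsub l2norm_lt //.
have [htr2 _] := l2_vsub h2 (@l2_trunc _ N h).
have [_ le] := l2_mulop htr2 q2; apply: le_lt_trans le _.
set t := norm2 h - psum2 h N in hN.
have t0 : 0 <= t by rewrite subr_ge0 psum2_le_norm2.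
apply: (@le_lt_trans _ _ (Kmul * t * norm2 q)).
  by rewrite ler_wpM2r // ler_wpM2l // norm2_vsub_trunc_le.
rewrite ltr_pdivlMr // in hN; nra.
Qed.

Lemma ATu_mulop_on_ball S x : ATu a S -> l2 x -> norm2 x <= 1 -> S x = mulop (S e0) x.
Proof.
move=> [S_bd Sapp] x2 x1; set h := S e0.
have [S2 _ _ _] := S_bd; have h2 : l2 h := S2 _ l2_e0.
have S_l2bd := bounded_op_l2_bounded S_bd.
have Sx2 := S2 _ x2; have [hx2 _] := l2_mulop h2 x2.
have [D2 _] := l2_vsub Sx2 hx2.
suff /(norm2_le0 D2) D0 : norm2 (vsub (S x) (mulop h x)) <= 0.
  apply: funext => n; apply/eqP; rewrite -subr_eq0; apply/eqP.
  exact: (congr1 (fun f => f n) D0).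
apply: (le0_from_eps (k := 2 + 2 * Kmul)); first by have := Kmul_ge0; lra.
move=> e e_gt0; have [p Sp] := Sapp (Num.sqrt e) ltac:(by rewrite sqrtr_gt0).
move: Sp; rewrite polyop_mulop; set g := poly_e0 p => Sg.
have g2 : l2 g := @l2_poly_e0 p; have g_bd := l2_bounded_mulop g2.
have d0 : 0 <= opdist S (mulop g) by apply: opnorm_ge0; exact: l2_bounded_sub.
have dist_e : opdist S (mulop g) ^+ 2 <= e.
  rewrite -[leRHS](@sqr_sqrtr _ e); last exact: ltW.
  by apply: lerXn2r; rewrite ?nnegrE ?sqrtr_ge0 // ltW.
have [gx2 _] := l2_mulop g2 x2; have [gh2 _] := l2_vsub g2 h2.
have Sg_x : norm2 (vsub (S x) (mulop g x)) <= e.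
  exact: le_trans (norm2_vsub_le_opdist S_l2bd g_bd x2 x1) dist_e.
have gh_x : norm2 (vsub (mulop g x) (mulop h x)) <= Kmul * e.
  rewrite mulop_vsub; have [_ le] := l2_mulop gh2 x2; apply: le_trans le _.
  rewrite -mulrA ler_wpM2l ?Kmul_ge0 // -[leRHS]mulr1 ler_pM ?norm2_ge0 //.
  rewrite norm2_vsubC; apply: le_trans dist_e.
  by have := norm2_e0_vsub_le_opdist S_l2bd g_bd; rewrite mulop_e0.
apply: le_trans (norm2_vsub_triangle Sx2 gx2 hx2) _.
have -> : (2 + 2 * Kmul) * e = 2 * e + 2 * (Kmul * e) by ring.
by rewrite lerD // ler_wpM2l.
Qed.

Lemma ATu_mulop S : ATu a S -> S = mulop (S e0).
Proof.
move=> S_ATu; have S_bd := S_ATu.1; have h2 : l2 (S e0) by case: S_bd => S2 _ _ _; exact: S2 _ l2_e0.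
apply: funext => x; have [x2|x2] := pselect (l2 x); last first.
  by rewrite mulop_notl2 //; case: S_bd => _ S0 _ _; exact: S0.
set r : R := (1 + norm2 x)^-1; have x0 := norm2_ge0 x2.
have r_gt0 : 0 < r by rewrite invr_gt0 ltr_pwDl.
set c : C := (r%:C)%C; have [cx2 cx_norm] := l2_scale c x2.
have cx1 : norm2 (fun n => c * x n) <= 1.
  apply: le_trans cx_norm _; rewrite /cabs2 /= expr0n /= addr0.
  have : r * (1 + norm2 x) = 1 by rewrite mulVf // gt_eqF // ltr_pwDl.
  nra.
have := ATu_mulop_on_ball S_ATu cx2 cx1.
rewrite (bounded_opZ c S_bd x2) (bounded_opZ c (bounded_op_mulop h2) x2) => Scx.
have c_neq0 : c != 0 by rewrite eq_complex /= (gt_eqF r_gt0).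
by apply: funext => n; apply: (mulfI c_neq0); rewrite /= (congr1 (fun f => f n) Scx).
Qed.

Lemma ATu_iff S : ATu a S <-> exists2 h, l2 h & S = mulop h.
Proof.
split=> [S_ATu|[h h2 ->]].
  exists (S e0); last exact: ATu_mulop.
  by case: S_ATu => -[S2 _ _ _] _; exact: S2 _ l2_e0.
split; first exact: bounded_op_mulop.
by move=> e e_gt0; have [N hN] := mulop_approx h2 e_gt0; exists (trunc_poly N h).
Qed.

Lemma AT_iff S : AT a S <-> exists2 h, l2 h /\ h 0%N = 0 & S = mulop h.
Proof.
split=> [[S_bd Sapp]|[h [h2 h0] ->]].
  have S_ATu : ATu a S.
    by split=> // e e_gt0; have [p [_ Sp]] := Sapp e e_gt0; exists p.
  have [h h2 Sh] := (ATu_iff S).1 S_ATu; exists h => //; split=> //.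
  apply: coord0_eq0_approx h2 _ => e e_gt0.
  have [p [p0 Sp]] := Sapp e e_gt0; exists (poly_e0 p).
  split; [split; [exact: l2_poly_e0 | by rewrite poly_e0_0]|].
  have Se0 : S e0 = h by rewrite Sh mulop_e0.
  have pe2 := @l2_poly_e0 p.
  apply: le_lt_trans Sp; rewrite polyop_mulop.
  have := l2norm_e0_vsub_le_opdist (bounded_op_l2_bounded S_bd) (l2_bounded_mulop pe2).
  by rewrite mulop_e0 Se0.
split; first exact: bounded_op_mulop.
move=> e e_gt0; have [N hN] := mulop_approx h2 e_gt0; exists (trunc_poly N h).
by split=> //; rewrite /trunc_poly coef_poly; case: ifP => // _; rewrite h0 mul0r.
Qed.

Section Correspondence.
Variable Hs : set (nat -> C).
Variable A : set (Op R).
Hypothesis A_iff : forall S, A S <-> exists2 h, Hs h & S = mulop h.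
Hypothesis Hs_l2 : Hs `<=` @l2 R.
Hypothesis Hs_lin : forall c h g, Hs h -> Hs g -> Hs (fun n => c * h n + g n).
Hypothesis Hs0 : Hs (fun _ => 0).
Hypothesis Hs_mulop : forall h g, Hs h -> Hs g -> Hs (mulop h g).
Hypothesis Hs_T : Hs (poly_e0 'X).
Hypothesis Hs_closed : forall x, l2 x ->
  (forall e, 0 < e -> exists y, Hs y /\ l2norm (vsub x y) < e) -> Hs x.

Lemma A_mulop_Fe S : A S -> S = mulop (Fe S) /\ Hs (Fe S).
Proof. by case/A_iff => h Hh ->; rewrite /Defs.Fe mulop_e0. Qed.

Lemma A_mulop h : Hs h -> A (mulop h) /\ Fe (mulop h) = h.
Proof. by move=> Hh; split; [apply/A_iff; exists h | rewrite /Defs.Fe mulop_e0]. Qed.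

Lemma A_l2_bounded S : A S -> l2_bounded S.
Proof. by move=> /A_mulop_Fe[eS /Hs_l2 h2]; rewrite eS; exact: l2_bounded_mulop. Qed.

Lemma A_T : A T.
Proof. by rewrite shift_mulop; case: (A_mulop Hs_T). Qed.

Lemma Fe_lin_homeo : lin_homeo A Hs (@Fe R).
Proof.
have K1 : 0 < Num.sqrt Kmul + 1 by rewrite ltr_wpDl ?sqrtr_ge0.
split=> //.
- split=> [S /A_mulop_Fe[]//|x Hx].
  by exists (mulop x); exact: A_mulop.
- move=> S S' AS AS' FSS'.
  by rewrite (A_mulop_Fe AS).1 (A_mulop_Fe AS').1 FSS'.
- move=> S e AS e_gt0; exists e => // S' AS'; apply: le_lt_trans.
  by apply: l2norm_e0_vsub_le_opdist; exact: A_l2_bounded.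
- move=> S e AS e_gt0; exists (e / (Num.sqrt Kmul + 1)); first by rewrite divr_gt0.
  move=> S' AS' lt; have [eS /Hs_l2 h2] := A_mulop_Fe AS.
  have [eS' /Hs_l2 h2'] := A_mulop_Fe AS'.
  by rewrite eS [X in opdist _ X]eS'; exact: opdist_mulop_lt.
Qed.

Lemma inv_subspace_polyop M p q :
  closed_inv_subspace a Hs M -> M q -> M (polyop a p q).
Proof.
case=> MHs M0 [Madd Mscale] MT _ Mq; have q2 := Hs_l2 (MHs q Mq).
have M_iter i : M (iter i T q) by elim: i => [|i IH] //=; exact: MT.
have -> : polyop a p q = fun n => \sum_(i < size p) p`_i * iter i T q n.
  by apply: funext => n; rewrite /polyop asboolT.
elim: (size p) => [|m IH].
  by rewrite (_ : (fun n => _) = fun _ => 0) //; apply: funext => n; rewrite big_ord0.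
rewrite (_ : (fun n => _) =
  fun n => \sum_(i < m) p`_i * iter i T q n + p`_m * iter m T q n).
  by apply: Madd => //; exact: Mscale.
by apply: funext => n; rewrite big_ord_recr.
Qed.

Lemma inv_subspace_mulop M h q :
  closed_inv_subspace a Hs M -> Hs h -> M q -> M (mulop h q).
Proof.
move=> M_inv Hh Mq; have [MHs _ _ _ Mclosed] := M_inv.
have h2 := Hs_l2 Hh; have q2 := Hs_l2 (MHs q Mq).
apply: Mclosed; first by case: (l2_mulop h2 q2).
move=> e e_gt0; have [N hN] := mulop_approx_pointwise h2 q2 e_gt0.
by exists (polyop a (trunc_poly N h) q); split=> //; exact: inv_subspace_polyop.
Qed.

Lemma closed_ideal_image J : closed_ideal A J -> closed_inv_subspace a Hs (@Fe R @` J).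
Proof.
case=> JA J0 [Jadd Jscale] Jmul Jclosed; split.
- by move=> _ [S JS <-]; case: (A_mulop_Fe (JA S JS)).
- by exists (fun _ _ => 0).
- split=> [_ _ [S JS <-] [S' JS' <-]|c _ [S JS <-]].
    by exists (fun x n => S x n + S' x n); [exact: Jadd|].
  by exists (fun x n => c * S x n); [exact: Jscale|].
- by move=> _ [S JS <-]; exists (T \o S) => //; case: (Jmul _ _ A_T JS).
move=> x x2 xapp.
have Hx : Hs x.
  apply: Hs_closed => // e e_gt0; have [_ [[S JS <-] lt]] := xapp e e_gt0.
  by exists (Fe S); split=> //; case: (A_mulop_Fe (JA S JS)).
have [Ax Fx] := A_mulop Hx; exists (mulop x) => //; apply: Jclosed => // e e_gt0.
have K1 : 0 < Num.sqrt Kmul + 1 by rewrite ltr_wpDl ?sqrtr_ge0.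
have [_ [[Q JQ <-] lt]] := xapp _ (divr_gt0 e_gt0 K1).
have [eQ /Hs_l2 hQ2] := A_mulop_Fe (JA Q JQ).
by exists Q; split=> //; rewrite [in opdist _ Q]eQ; apply: opdist_mulop_lt.
Qed.

Lemma inv_subspace_preimage M : closed_inv_subspace a Hs M ->
  closed_ideal A [set S | A S /\ M (Fe S)].
Proof.
move=> M_inv; have [MHs M0 [Madd Mscale] _ Mclosed] := M_inv.
have A0 : A (fun _ _ => 0) by rewrite -mulop0l; case: (A_mulop Hs0).
split.
- by move=> S [].
- by split.
- split=> [S S' [AS MS] [AS' MS']|c S [AS MS]].
    split; last exact: Madd.
    have [eS HS] := A_mulop_Fe AS; have [eS' HS'] := A_mulop_Fe AS'.
    rewrite eS eS' (_ : (fun x n => _) = mulop (fun n => 1 * Fe S n + Fe S' n)).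
      by case: (A_mulop (Hs_lin 1 HS HS')).
    by apply: funext => x; rewrite mulop_linl; apply: funext => n; rewrite mul1r.
  split; last exact: Mscale.
  have [eS HS] := A_mulop_Fe AS.
  rewrite eS (_ : (fun x n => _) = mulop (fun n => c * Fe S n + 0)).
    by case: (A_mulop (Hs_lin c HS Hs0)).
  by apply: funext => x; rewrite mulop_linl mulop0l; apply: funext => n; rewrite addr0.
- move=> S Q /A_iff[h Hh ->] [/A_iff[g Hg ->]]; rewrite /Defs.Fe mulop_e0 => Mg.
  have h2 := Hs_l2 Hh; have g2 := Hs_l2 Hg.
  rewrite !mulop_comp // -(mulopC h2 g2) /= mulop_e0.
  have [Ahg _] := A_mulop (Hs_mulop Hh Hg).
  by have := inv_subspace_mulop M_inv Hh Mg.
move=> S AS Sapp; split=> //; apply: Mclosed.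
  by case: (A_l2_bounded AS) => S2 _; exact: S2 _ l2_e0.
move=> e e_gt0; have [Q [[AQ MQ] lt]] := Sapp e e_gt0.
exists (Fe Q); split=> //; apply: le_lt_trans lt.
by apply: l2norm_e0_vsub_le_opdist; exact: A_l2_bounded.
Qed.

Lemma closed_ideal_image_subset J1 J2 : closed_ideal A J1 -> closed_ideal A J2 ->
  (J1 `<=` J2 <-> @Fe R @` J1 `<=` @Fe R @` J2).
Proof.
move=> [J1A _ _ _ _] [J2A _ _ _ _]; split=> [J12 _ [S J1S <-]|J12 S J1S].
  by exists S => //; exact: J12.
have [S' J2S' FS'] : (@Fe R @` J2) (Fe S) by apply: J12; exists S.
by rewrite (A_mulop_Fe (J1A S J1S)).1 -FS' -(A_mulop_Fe (J2A S' J2S')).1.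
Qed.

Lemma Fe_lattice_iso :
  lattice_iso (closed_ideal A) (closed_inv_subspace a Hs) (@Fe R).
Proof.
split; [exact: closed_ideal_image | move=> M M_inv | exact: closed_ideal_image_subset].
exists [set S | A S /\ M (Fe S)]; split; first exact: inv_subspace_preimage.
apply/seteqP; split=> [_ [S [_ MS] <-] //|x Mx].
have [MHs _ _ _ _] := M_inv; have [Ax Fx] := A_mulop (MHs x Mx).
by exists (mulop x) => //; rewrite /= Fx.
Qed.

End Correspondence.

Lemma H1_lin (c : C) h g : H1 h -> H1 g -> H1 (fun n => c * h n + g n).
Proof.
move=> /H1_iff[h2 h0] /H1_iff[g2 g0]; apply/H1_iff.
by split; [case: (l2_lin c h2 g2) | rewrite h0 g0 mulr0 addr0].
Qed.

Lemma H1_0 : H1 (fun _ => 0 : C).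
Proof. by apply/H1_iff; split; [exact: l2_0|]. Qed.

Lemma H1_mulop h g : H1 h -> H1 g -> H1 (mulop h g).
Proof.
move=> /H1_iff[h2 h0] /H1_iff[g2 g0]; apply/H1_iff.
split; first by case: (l2_mulop h2 g2).
by rewrite mulopE // /conv big_ord1 /unweight h0 !mul0r mulr0.
Qed.

Lemma H1_T : H1 (poly_e0 'X).
Proof. by apply/H1_iff; split; [exact: l2_poly_e0 | rewrite poly_e0_0 coefX]. Qed.

Lemma H1_closed (x : nat -> C) : l2 x ->
  (forall e, 0 < e -> exists y, H1 y /\ l2norm (vsub x y) < e) -> H1 x.
Proof.
move=> x2 xapp; apply/H1_iff; split=> //; apply: coord0_eq0_approx x2 _ => e e_gt0.
by have [y [/H1_iff H1y xy]] := xapp e e_gt0; exists y.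
Qed.

Lemma AT_correspondence : lin_homeo (AT a) (@H1 R) (@Fe R) /\
  lattice_iso (closed_ideal (AT a)) (closed_inv_subspace a (@H1 R)) (@Fe R).
Proof.
have AT_H1 S : AT a S <-> exists2 h, H1 h & S = mulop h.
  by rewrite AT_iff; split=> -[h Hh ->]; exists h => //; exact/H1_iff.
have H1_l2 : @H1 R `<=` @l2 R by move=> h /H1_iff[].
split; first exact: Fe_lin_homeo.
exact: Fe_lattice_iso H1_lin H1_0 H1_mulop H1_T H1_closed.
Qed.

Lemma ATu_correspondence : lin_homeo (ATu a) (@l2 R) (@Fe R) /\
  lattice_iso (closed_ideal (ATu a)) (closed_inv_subspace a (@l2 R)) (@Fe R).
Proof.
have l2_lin_closed (c : C) (h g : nat -> C) : l2 h -> l2 g -> l2 (fun n => c * h n + g n).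
  by move=> h2 g2; case: (l2_lin c h2 g2).
have l2_mulop_closed h g : l2 h -> l2 g -> l2 (mulop h g).
  by move=> h2 g2; case: (l2_mulop h2 g2).
have l2_l2 : @l2 R `<=` @l2 R by [].
split; first exact: Fe_lin_homeo ATu_iff l2_l2.
exact: Fe_lattice_iso ATu_iff l2_l2 l2_lin_closed l2_0 l2_mulop_closed (@l2_poly_e0 'X)
  (fun x x2 _ => x2).
Qed.

End Multipliers.

Theorem mainTheorem11 (R : realType) (a : nat -> R[i]) :
  (forall n, a n != 0) ->
  (forall n, cabs (a n.+1) <= cabs (a n)) ->
  l2 a ->
  (lin_homeo (AT a) (@H1 R) (@Fe R) /\
   lattice_iso (closed_ideal (AT a)) (closed_inv_subspace a (@H1 R)) (@Fe R)) /\
  (lin_homeo (ATu a) (@l2 R) (@Fe R) /\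
   lattice_iso (closed_ideal (ATu a)) (closed_inv_subspace a (@l2 R)) (@Fe R)).
Proof.
move=> a_neq0 cabs_a_nonincr l2a.
by split; [exact: AT_correspondence | exact: ATu_correspondence].
Qed.
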